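(* Let $k_{\mathcal{Z}}$ and $k_{\mathcal{Y}}$ be strictly positive definite kernels on $\mathcal{Z}$ and $\mathcal{Y}=\{\bm{e}_1,\dots,\bm{e}_c\}\subset\mathbb{R}^c$, and let $\varepsilon>0$. Let $(\bm{z}_i,\bm{y}_i)_{i=1}^n$ be observations with $\bm{z}_1,\dots,\bm{z}_n\in\mathcal{Z}$ pairwise distinct and $\bm{y}_i\in\mathcal{Y}$, where every element of $\mathcal{Y}$ occurs among the $\bm{y}_i$. Let $\bm{K}_{ij}=k_{\mathcal{Z}}(\bm{z}_i,\bm{z}_j)$, $\bm{L}_{ij}=k_{\mathcal{Y}}(\bm{y}_i,\bm{y}_j)$, $\tilde{\bm{L}}=\varepsilon n\bm{I}_n+\bm{L}$, and for $y\in\mathcal{Y}$ let $\bm{L}_y=(k_{\mathcal{Y}}(\bm{y}_1,y),\dots,k_{\mathcal{Y}}(\bm{y}_n,y))^T$ (the column of $\bm{L}$ indexed by any $i$ with $\bm{y}_i=y$). Define the empirical conditional mean embeddings $\hat{\mu}_{Z|y}=\bm{\Phi}\tilde{\bm{L}}^{-1}\bm{L}_y\in\mathcal{H}_{\mathcal{Z}}$, where $\bm{\Phi}=(\phi(\bm{z}_1),\dots,\phi(\bm{z}_n))$, and $$\hat{D}(y_i,y_j)=\mathrm{MCMD}(\hat{P}_{Z|y_i},\hat{P}_{Z|y_j})=\|\hat{\mu}_{Z|y_i}-\hat{\mu}_{Z|y_j}\|_{\mathcal{H}_{\mathcal{Z}}}=\sqrt{(\bm{L}_{y_i}-\bm{L}_{y_j})^T\tilde{\bm{L}}^{-1}\bm{K}\tilde{\bm{L}}^{-1}(\bm{L}_{y_i}-\bm{L}_{y_j})}.$$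 Then $\hat{D}$ is a metric on $\mathcal{Y}$.
   Context: $\mathcal{H}_{\mathcal{Z}}$ is the RKHS of $k_{\mathcal{Z}}$ with feature map $\phi(z)=k_{\mathcal{Z}}(z,\cdot)$. A kernel is strictly positive definite if its Gram matrix on any finite set of pairwise distinct points is positive definite. $\bm{e}_i$ denotes the $i$-th standard basis vector of $\mathbb{R}^c$ (one-hot labels). *)

From HB Require Import structures.
From mathcomp Require Import all_boot all_order all_algebra.
Set Implicit Arguments. Unset Strict Implicit. Unset Printing Implicit Defensive.
Import Order.TTheory GRing.Theory Num.Theory.
Local Open Scope ring_scope.

Definition gram (R : ringType) (T : Type) (k : T -> T -> R) (m : nat)
  (pts : 'I_m -> T) : 'M[R]_m := \matrix_(i, j) k (pts i) (pts j).

Definition posdef_mx (R : numDomainType) (m : nat) (A : 'M[R]_m) : Prop :=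
  A^T = A /\ forall v : 'cV[R]_m, v != 0 -> 0 < (v^T *m A *m v) 0 0.

Definition spd_kernel_on (R : numDomainType) (T : Type) (D : T -> Prop)
  (k : T -> T -> R) : Prop :=
  (forall x y, D x -> D y -> k x y = k y x) /\
  forall (m : nat) (pts : 'I_m -> T),
    (forall i, D (pts i)) -> injective pts -> posdef_mx (gram k pts).

Definition onehot (R : ringType) (c : nat) (v : 'rV[R]_c) : Prop :=
  exists i : 'I_c, v = delta_mx 0 i.

Definition metric_on (R : numDomainType) (T : Type) (D : T -> Prop)
  (d : T -> T -> R) : Prop :=
  (forall x y, D x -> D y -> 0 <= d x y) /\
  (forall x y, D x -> D y -> (d x y = 0 <-> x = y)) /\
  (forall x y, D x -> D y -> d x y = d y x) /\
  (forall x y z, D x -> D y -> D z -> d x z <= d x y + d y z).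

Definition Lvec (R : ringType) (T : Type) (kY : T -> T -> R) (n : nat)
  (ys : 'I_n -> T) (y : T) : 'cV[R]_n := \col_i kY (ys i) y.

Definition Ltilde (R : ringType) (T : Type) (kY : T -> T -> R) (n : nat)
  (ys : 'I_n -> T) (eps : R) : 'M[R]_n :=
  (eps * n%:R)%:M + gram kY ys.

Definition Dhat (R : rcfType) (Z T : Type) (kZ : Z -> Z -> R)
  (kY : T -> T -> R) (eps : R) (n : nat) (zs : 'I_n -> Z) (ys : 'I_n -> T)
  (y y' : T) : R :=
  let Lt := invmx (Ltilde kY ys eps) in
  let u := Lvec kY ys y - Lvec kY ys y' in
  Num.sqrt ((u^T *m Lt *m gram kZ zs *m Lt *m u) 0 0).

From HB Require Import structures.
From mathcomp Require Import all_boot all_order all_algebra.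
From mathcomp Require Import ring lra.
Import Order.TTheory GRing.Theory Num.Theory.
Local Open Scope ring_scope.
Set Implicit Arguments. Unset Strict Implicit.

(* Lt := eps n I + L is positive definite: L is psd, being the Gram matrix of
   kY at the distinct labels with rows and columns repeated.  Hence Lt is
   invertible and symmetric, and Dhat y y' is the norm induced by the positive
   definite matrix K of  Lt^-1 L_y - Lt^-1 L_y'.  A norm pulled back along an
   injective map is a metric, and y |-> Lt^-1 L_y is injective: if L_y = L_y',
   reading these vectors at sample indices labelled y and y' gives
   kY(y,y) - kY(y,y') - kY(y',y) + kY(y',y') = 0, i.e. phi(y) = phi(y') in the
   RKHS of kY, which strict positive definiteness forbids unless y = y'. *)

Definition psd_mx (R : numDomainType) (m : nat) (A : 'M[R]_m) : Prop :=
  A^T = A /\ forall v : 'cV[R]_m, 0 <= (v^T *m A *m v) 0 0.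

Section DefiniteMatrices.
Variable R : numFieldType.

Lemma posdef_psd m (A : 'M[R]_m) : posdef_mx A -> psd_mx A.
Proof.
case=> AT A_pos; split=> // v.
have [->|v_neq0] := eqVneq v 0; first by rewrite mulmx0 mxE.
exact/ltW/A_pos.
Qed.

Lemma psd_mxsub m n (f : 'I_n -> 'I_m) (A : 'M[R]_m) :
  psd_mx A -> psd_mx (mxsub f f A).
Proof.
case=> AT A_psd; split; first by rewrite trmx_mxsub AT.
move=> v; pose S : 'M[R]_(m, n) := mxsub id f 1%:M.
have -> : mxsub f f A = S^T *m A *m S.
  by rewrite trmx_mxsub trmx1 mul_rowsub_mx mul1mx mulmx_colsub mulmx1 -mxsubcr.
have -> : v^T *m (S^T *m A *m S) *m v = (S *m v)^T *m A *m (S *m v).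
  by rewrite trmx_mul !mulmxA.
exact: A_psd.
Qed.

Lemma posdef_unitmx m (A : 'M[R]_m) : posdef_mx A -> A \in unitmx.
Proof.
case=> _ A_pos; rewrite unitmxE unitfE; apply/det0P => -[v v_neq0 vA0].
by have := A_pos v^T; rewrite trmx_eq0 trmxK vA0 mul0mx mxE ltxx => /(_ v_neq0).
Qed.

End DefiniteMatrices.

Section RealDefiniteMatrices.
Variable R : realFieldType.

Lemma trmx_mul_self_gt0 m (v : 'cV[R]_m) : v != 0 -> 0 < (v^T *m v) 0 0.
Proof.
case/cV0Pn=> i vi_neq0; rewrite mxE (bigD1 i) //= ltr_wpDr //.
  by apply: sumr_ge0 => j _; rewrite mxE -expr2 sqr_ge0.
by rewrite mxE -expr2 exprn_even_gt0.
Qed.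

Lemma posdef_ridge m (eps : R) (B : 'M[R]_m) :
  0 < eps -> psd_mx B -> posdef_mx ((eps * m%:R)%:M + B).
Proof.
move=> eps_gt0 [BT B_psd]; split=> [|v v_neq0]; first by rewrite linearD /= tr_scalar_mx BT.
have m_gt0 : (0 < m)%N by case: m v v_neq0 {B BT B_psd} => // v; rewrite flatmx0 eqxx.
rewrite mulmxDr mulmxDl mxE mul_mx_scalar -scalemxAl mxE ltr_wpDr //.
by rewrite !mulr_gt0 ?ltr0n ?trmx_mul_self_gt0.
Qed.

End RealDefiniteMatrices.

Lemma gram_reindex (R : nzRingType) (T : Type) (k : T -> T -> R) m n
    (base : 'I_m -> T) (f : 'I_n -> 'I_m) (pts : 'I_n -> T) :
  (forall i, pts i = base (f i)) -> gram k pts = mxsub f f (gram k base).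
Proof. by move=> pts_f; apply/matrixP => i j; rewrite !mxE !pts_f. Qed.

Lemma spd_kernel_gram_psd (R : numFieldType) (T : eqType) (D : T -> Prop)
    (k : T -> T -> R) n (pts : 'I_n -> T) :
  spd_kernel_on D k -> (forall i, D (pts i)) -> psd_mx (gram k pts).
Proof.
move=> [_ k_pd] D_pts.
pose t := in_tuple (undup (codom pts)).
have t_inj : injective (tnth t) by apply/tuple_uniqP/undup_uniq.
have D_t j : D (tnth t j).
  have : tnth t j \in codom pts by rewrite -mem_undup mem_tnth.
  by case/codomP=> i ->.
have [f pts_f] : exists f, forall i, pts i = tnth t (f i).
  apply: (@fin_all_exists _ _ (fun i j => pts i = tnth t j)) => i; apply/tnthP.
  by rewrite mem_undup codom_f.
by rewrite (gram_reindex _ pts_f); apply/psd_mxsub/posdef_psd/k_pd.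
Qed.

Lemma spd_kernel_sqdist_gt0 (R : numDomainType) (T : eqType) (D : T -> Prop)
    (k : T -> T -> R) (x y : T) :
  spd_kernel_on D k -> D x -> D y -> x != y ->
  0 < k x x - k x y - k y x + k y y.
Proof.
move=> [_ k_pd] Dx Dy x_neq_y.
pose pts (i : 'I_2) := if val i is 0 then x else y.
have pts_inj : injective pts.
  move=> [[|[|i]] ?] [[|[|j]] ?] //; rewrite /pts /= => pts_ij; apply: val_inj => //=;
    by move: x_neq_y; rewrite pts_ij eqxx.
have D_pts : forall i, D (pts i) by move=> [[|i] ?].
pose v : 'cV[R]_2 := \col_i (if val i is 0 then 1 else -1).
have v_neq0 : v != 0 by apply/cV0Pn; exists 0; rewrite mxE oner_neq0.
have := (k_pd 2 pts D_pts pts_inj).2 v v_neq0.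
rewrite !mxE !big_ord_recl !big_ord0 /= !mxE !big_ord_recl !big_ord0 /= !mxE /=.
by rewrite /pts /=; congr (0 < _); ring.
Qed.

Lemma Lvec_inj (R : numDomainType) (T : eqType) (D : T -> Prop)
    (k : T -> T -> R) n (ys : 'I_n -> T) (y y' : T) :
  spd_kernel_on D k -> (forall x, D x -> exists i, ys i = x) ->
  D y -> D y' -> Lvec k ys y = Lvec k ys y' -> y = y'.
Proof.
move=> k_spd ys_onto Dy Dy' eq_L; apply/eqP/negP => /negP y_neq_y'.
have [i ys_i] := ys_onto y Dy; have [j ys_j] := ys_onto y' Dy'.
have /matrixP eq_L_i := eq_L; have /matrixP eq_L_j := eq_L.
move: (eq_L_i i 0) (eq_L_j j 0) (spd_kernel_sqdist_gt0 k_spd Dy Dy' y_neq_y').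
rewrite !mxE ys_i ys_j => -> ->.
by rewrite subrr sub0r addNr ltxx.
Qed.

Section FormNorm.
Variables (R : rcfType) (m : nat) (K : 'M[R]_m).
Hypothesis K_pd : posdef_mx K.

Definition qform (u v : 'cV[R]_m) : R := (u^T *m K *m v) 0 0.
Definition qnorm (v : 'cV[R]_m) : R := Num.sqrt (qform v v).

Lemma qformDl u v w : qform (u + v) w = qform u w + qform v w.
Proof. by rewrite /qform linearD /= !mulmxDl mxE. Qed.

Lemma qformDr u v w : qform u (v + w) = qform u v + qform u w.
Proof. by rewrite /qform !mulmxDr mxE. Qed.

Lemma qformZl a u v : qform (a *: u) v = a * qform u v.
Proof. by rewrite /qform linearZ /= -!scalemxAl mxE. Qed.

Lemma qformZr a u v : qform u (a *: v) = a * qform u v.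
Proof. by rewrite /qform -!scalemxAr mxE. Qed.

Lemma qformC u v : qform u v = qform v u.
Proof.
have -> : qform u v = (u^T *m K *m v)^T 0 0 by rewrite mxE.
by rewrite !trmx_mul trmxK K_pd.1 mulmxA.
Qed.

Lemma qform_ge0 v : 0 <= qform v v.
Proof. exact: (posdef_psd K_pd).2. Qed.

Lemma qform_eq0 v : qform v v = 0 -> v = 0.
Proof.
move=> qv0; apply/eqP/negP => /negP /(K_pd.2 v).
by rewrite -/(qform v v) qv0 ltxx.
Qed.

Lemma qform_Cauchy_Schwarz u v : qform u v ^+ 2 <= qform u u * qform v v.
Proof.
have [->|v_neq0] := eqVneq v 0; first by rewrite /qform !mulmx0 mxE expr0n mulr0.
have qv_gt0 : 0 < qform v v by exact: K_pd.2.
have := qform_ge0 (qform v v *: u + (- qform u v) *: v).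
rewrite qformDl !qformDr !qformZl !qformZr (qformC v u) => q_ge0.
have : 0 <= qform v v * (qform u u * qform v v - qform u v ^+ 2) by nra.
by rewrite pmulr_rge0 // subr_ge0.
Qed.

Lemma qform_le_qnorm u v : qform u v <= qnorm u * qnorm v.
Proof.
rewrite -sqrtrM ?qform_ge0 // (le_trans (ler_norm _)) //.
by rewrite -sqrtr_sqr ler_sqrt ?mulr_ge0 ?qform_ge0 ?qform_Cauchy_Schwarz.
Qed.

Lemma qnormD u v : qnorm (u + v) <= qnorm u + qnorm v.
Proof.
rewrite -(@ler_pXn2r _ 2) ?nnegrE ?addr_ge0 ?sqrtr_ge0 //.
rewrite sqrrD !sqr_sqrtr ?qform_ge0 // qformDl !qformDr (qformC v u).
by have := qform_le_qnorm u v; lra.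
Qed.

Lemma qnormN v : qnorm (- v) = qnorm v.
Proof. by rewrite /qnorm -scaleN1r qformZl qformZr mulN1r mulN1r opprK. Qed.

Lemma qnorm_eq0 v : qnorm v = 0 -> v = 0.
Proof.
move/eqP; rewrite sqrtr_eq0 => qv_le0.
by apply: qform_eq0; apply/eqP; rewrite eq_le qv_le0 qform_ge0.
Qed.

Lemma metric_on_qnorm (T : Type) (D : T -> Prop) (f : T -> 'cV[R]_m) :
  (forall x y, D x -> D y -> f x = f y -> x = y) ->
  metric_on D (fun x y => qnorm (f x - f y)).
Proof.
move=> f_inj; split; [|split; [|split]].
- by move=> x y _ _; apply: sqrtr_ge0.
- move=> x y Dx Dy; split=> [/qnorm_eq0/eqP|->].
    by rewrite subr_eq0 => /eqP/f_inj; apply.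
  by rewrite subrr /qnorm /qform mulmx0 mxE sqrtr0.
- by move=> x y _ _; rewrite -qnormN opprB.
- by move=> x y z _ _ _; rewrite -(subrKA (f y)); apply: qnormD.
Qed.

End FormNorm.

Lemma eq_metric_on (R : numDomainType) (T : Type) (D : T -> Prop)
    (d d' : T -> T -> R) :
  (forall x y, D x -> D y -> d x y = d' x y) -> metric_on D d' -> metric_on D d.
Proof.
move=> eq_d [d'_ge0 [d'_eq0 [d'C d'_tri]]]; split; [|split; [|split]].
- by move=> x y Dx Dy; rewrite eq_d; auto.
- by move=> x y Dx Dy; rewrite eq_d; auto.
- by move=> x y Dx Dy; rewrite !eq_d; auto.
- by move=> x y z Dx Dy Dz; rewrite !eq_d; auto.
Qed.

Theorem theorem4 (R : rcfType) (Z : Type) (c : nat)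
  (kZ : Z -> Z -> R) (kY : 'rV[R]_c -> 'rV[R]_c -> R) (eps : R)
  (n : nat) (zs : 'I_n -> Z) (ys : 'I_n -> 'rV[R]_c) :
  spd_kernel_on (fun _ : Z => True) kZ ->
  spd_kernel_on (@onehot R c) kY ->
  0 < eps ->
  injective zs ->
  (forall i, onehot (ys i)) ->
  (forall y, onehot y -> exists i, ys i = y) ->
  metric_on (@onehot R c) (Dhat kZ kY eps zs ys).
Proof.
move=> [_ kZ_pd] kY_spd eps_gt0 zs_inj ys_onehot ys_onto.
set Lt := Ltilde kY ys eps.
have Lt_pd : posdef_mx Lt := posdef_ridge eps_gt0 (spd_kernel_gram_psd kY_spd ys_onehot).
have K_pd : posdef_mx (gram kZ zs) := kZ_pd n zs (fun=> I) zs_inj.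
pose f y := invmx Lt *m Lvec kY ys y.
apply: (@eq_metric_on _ _ _ _ (fun y y' => qnorm (gram kZ zs) (f y - f y'))).
  by move=> y y' _ _; rewrite /Dhat /qnorm /qform -mulmxBr trmx_mul trmx_inv Lt_pd.1 !mulmxA.
apply: (metric_on_qnorm K_pd) => y y' Dy Dy' /(can_inj (mulKVmx (posdef_unitmx Lt_pd))).
exact: (Lvec_inj kY_spd ys_onto).
Qed.
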